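(* Let $X$ be a real Hilbert space, let $\rho>-1$ and let $A\colon X\rightrightarrows X$ be $\rho$-comonotone with $\operatorname{ran}(\mathrm{Id}+A)=X$. Then $A$ is maximally $\rho$-comonotone.
   Context: For $\rho\in\mathbb R$, $A\colon X\rightrightarrows X$ is $\rho$-comonotone if $\langle x-y,u-v\rangle\ge\rho\|u-v\|^2$ for all $(x,u),(y,v)\in\operatorname{gra}A$; maximally $\rho$-comonotone if moreover no $\rho$-comonotone operator has a graph properly containing $\operatorname{gra}A$. *)

From HB Require Import structures.
From mathcomp Require Import all_boot all_order all_algebra.
From mathcomp Require Import all_classical all_reals all_analysis.
Set Implicit Arguments. Unset Strict Implicit. Unset Printing Implicit Defensive.
Import Order.TTheory GRing.Theory Num.Theory.
Import numFieldNormedType.Exports.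
Local Open Scope ring_scope.

(* A real Hilbert space is modelled as a complete normed space X over a
   realType R together with an inner product [ip] inducing its norm. *)
Definition is_inner_product (R : realType) (X : completeNormedModType R)
  (ip : X -> X -> R) : Prop :=
  [/\ (forall x y, ip x y = ip y x),
      (forall a x y z, ip (a *: x + y) z = a * ip x z + ip y z)
    & (forall x, ip x x = `|x| ^+ 2)].

(* Set-valued operators A : X ⇉ X, represented by their graph:
   u ∈ A x  iff  A x u. *)
Definition comonotone (R : realType) (X : completeNormedModType R)
  (ip : X -> X -> R) (rho : R) (A : X -> X -> Prop) : Prop :=
  forall x u y v, A x u -> A y v -> rho * `|u - v| ^+ 2 <= ip (x - y) (u - v).

Definition maximally_comonotone (R : realType) (X : completeNormedModType R)
  (ip : X -> X -> R) (rho : R) (A : X -> X -> Prop) : Prop :=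
  comonotone ip rho A /\
  forall B : X -> X -> Prop, comonotone ip rho B ->
    (forall x u, A x u -> B x u) ->
    ~ (exists x u, B x u /\ ~ A x u).

Definition range_id_plus_full (R : realType) (X : completeNormedModType R)
  (A : X -> X -> Prop) : Prop :=
  forall z : X, exists x u, A x u /\ z = x + u.

From mathcomp Require Import all_boot all_order all_algebra.
From mathcomp Require Import all_classical all_reals all_analysis.
From mathcomp Require Import lra.
Import Order.TTheory GRing.Theory Num.Theory.
Import numFieldNormedType.Exports.
Local Open Scope ring_scope.

(* If x + u = y + v with u ∈ B x and v ∈ B y, then x - y = -(u - v), so
   ρ-comonotonicity gives ρ‖u - v‖² ≤ -‖u - v‖²; as 1 + ρ > 0 this forces
   u = v and x = y.  Hence any ρ-comonotone extension B of A agrees with A: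
   a point (x, u) of gra B is matched, by surjectivity of Id + A, with some
   (y, v) ∈ gra A having x + u = y + v, and then (x, u) = (y, v). *)

Section InnerProduct.
Context {R : realType} {X : completeNormedModType R} {ip : X -> X -> R}.
Hypothesis hip : is_inner_product ip.

Lemma ip0l (z : X) : ip 0 z = 0.
Proof.
case: hip => _ hlin _; have := hlin 1 0 0 z.
rewrite scaler0 addr0 mul1r => h.
by apply: (addrI (ip 0 z)); rewrite addr0 -h.
Qed.

Lemma ipNl (x z : X) : ip (- x) z = - ip x z.
Proof.
case: hip => _ hlin _; have := hlin 1 x (- x) z.
rewrite scale1r mul1r subrr ip0l => /esym/eqP.
by rewrite addrC addr_eq0 => /eqP.
Qed.

Lemma comonotone_add_inj {rho : R} {B : X -> X -> Prop} {x u y v : X} :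
  -1 < rho -> comonotone ip rho B ->
  B x u -> B y v -> x + u = y + v -> x = y /\ u = v.
Proof.
move=> hrho hB Bxu Byv exy.
have dxy : x - y = - (u - v).
  by apply/eqP; rewrite opprB subr_eq addrAC eq_sym subr_eq exy addrC.
have := hB _ _ _ _ Bxu Byv.
case: hip => _ _ hnorm; rewrite dxy ipNl hnorm => hco.
have nuv0 : `|u - v| ^+ 2 <= 0.
  by rewrite -(pmulr_rle0 _ (_ : 0 < 1 + rho)); lra.
have uv : u = v.
  apply/eqP; rewrite -subr_eq0 -normr_eq0 -sqrf_eq0 eq_le nuv0.
  exact: sqr_ge0.
by split => //; move: exy; rewrite uv => /addIr.
Qed.

End InnerProduct.

Theorem proposition2p15 (R : realType) (X : completeNormedModType R)
  (ip : X -> X -> R) (hip : is_inner_product ip)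
  (rho : R) (hrho : -1 < rho) (A : X -> X -> Prop) :
  comonotone ip rho A -> range_id_plus_full A -> maximally_comonotone ip rho A.
Proof.
move=> hA hran; split => // B hB hAB [x [u [Bxu nAxu]]].
have [y [v [Ayv exy]]] := hran (x + u).
apply: nAxu.
by have [-> ->] := comonotone_add_inj hip hrho hB Bxu (hAB _ _ Ayv) exy.
Qed.
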